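(* Let $F\subseteq\mathcal{O}_{C,O}(\tau)$ be the face given by $x_b=0$ for some $b\in C\setminus\{\hat{0}\}$, where $P_\tau=C\sqcup O$ is a $k$-decomposition. If $b\in Y^i$, then $F$ is affinely isomorphic to $\mathcal{O}_{\tilde{C},O}(\tilde{\tau})$, where \[ \tilde{\tau}=(\tau_1,\dots,\tau_{i-1},\tau_i-1,\tau_{i+1},\dots,\tau_\ell) \] and $\tilde{C}=C\setminus\{b\}$. If $\tau_i-1=0$, this zero entry is omitted from $\tilde{\tau}$ (i.e. the rank level disappears).
   Context: For $\tau=(\tau_1,\dots,\tau_\ell)\in\mathbb{Z}_{>0}^\ell$, $P_\tau$ is the maximal ranked poset having $\tau_i$ elements in rank $i$, where any two elements of distinct ranks are comparable; it is extended by a minimum $\hat{0}$ and a maximum $\hat{1}$. Let $Y^i$ denote the set of elements of rank $i$, with $Y^0=\{\hat{0}\}$ and $Y^{\ell+1}=\{\hat{1}\}$. For $0\le k\le\ell$, the $k$-decomposition is $P_\tau=C\sqcup O$ with $C=\bigcup_{i=0}^k Y^i$ and $O=\bigcup_{i=k+1}^{\ell+1}Y^i$. The chain-order polytope $\mathcal{O}_{C,O}(\tau)$ is defined by: $x_{\hat{0}}=0$, $x_{\hat{1}}=1$; $0\le x_p$ for each $p\in C$; $x_a\le x_b$ for each covering relation $a\prec b$ with $a,b\in O$; and $x_{p_1}+\dots+x_{p_k}\le x_{q}$ for any choice of $p_j\in Y^j$ ($1\le j\le k$) and $q\in Y^{k+1}$. Two polytopes are identified up to affine isomorphism. *)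

From HB Require Import structures.
From mathcomp Require Import all_boot all_order all_algebra.
Set Implicit Arguments. Unset Strict Implicit. Unset Printing Implicit Defensive.
Import Order.TTheory GRing.Theory Num.Theory.
Local Open Scope ring_scope.

(* Elements of P_tau other than \hat0 and \hat1: an element of rank i+1
   (i : 'I_(size tau), i.e. ranks 1..l) together with its position among the
   tau_{i+1} elements of that rank.  The coordinates x_{\hat0} = 0 and
   x_{\hat1} = 1 are fixed, so points are functions elt tau -> R. *)
Definition elt (tau : seq nat) := {i : 'I_(size tau) & 'I_(nth 0%N tau i)}.

(* rank-index (0-based) of an element: the element lies in Y^(rk p + 1) *)
Definition rk (tau : seq nat) (p : elt tau) : nat := val (tag p).

(* The chain-order polytope O_{C,O}(tau) for the k-decomposition
   C = Y^0 u ... u Y^k,  O = Y^(k+1) u ... u Y^(l+1). *)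
Definition chain_order_polytope (R : realFieldType) (tau : seq nat) (k : nat)
    (x : elt tau -> R) : Prop :=
  (forall p : elt tau, (rk p < k)%N -> 0 <= x p) /\
  (forall a b : elt tau, (k <= rk a)%N -> rk b = (rk a).+1 -> x a <= x b) /\
  (forall a : elt tau, (k <= rk a)%N -> (rk a).+1 = size tau -> x a <= 1) /\
  (forall c : 'I_k -> elt tau, (forall j : 'I_k, rk (c j) = val j) ->
     (forall q : elt tau, rk q = k -> \sum_(j < k) x (c j) <= x q) /\
     (k = size tau -> \sum_(j < k) x (c j) <= 1)).

Definition affine_map (R : pzRingType) (T1 T2 : finType)
    (f : (T1 -> R) -> (T2 -> R)) : Prop :=
  exists (M : T2 -> T1 -> R) (c : T2 -> R),
    forall x t, f x t = c t + \sum_(s : T1) M t s * x s.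

Definition affinely_isomorphic (R : pzRingType) (T1 T2 : finType)
    (A : (T1 -> R) -> Prop) (B : (T2 -> R) -> Prop) : Prop :=
  exists (f : (T1 -> R) -> (T2 -> R)) (g : (T2 -> R) -> (T1 -> R)),
    [/\ affine_map f, affine_map g,
        (forall x, A x -> B (f x)), (forall y, B y -> A (g y)) &
        ((forall x, A x -> g (f x) = x) /\ (forall y, B y -> f (g y) = y))].

Definition tau_tilde (tau : seq nat) (i : nat) : seq nat :=
  if nth 0%N tau i == 1%N then take i tau ++ drop i.+1 tau
  else set_nth 0%N tau i (nth 0%N tau i).-1.

(* tilde C = C \ {b} is again a decomposition of P_{tilde tau}, of index
   k-1 if the level of b disappears and k otherwise *)
Definition k_tilde (tau : seq nat) (k i : nat) : nat :=
  if nth 0%N tau i == 1%N then k.-1 else k.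

From mathcomp Require Import all_boot all_order all_algebra.
From mathcomp Require Import zify.
From Stdlib Require Import FunctionalExtensionality.
Set Implicit Arguments. Unset Strict Implicit. Unset Printing Implicit Defensive.
Import Order.TTheory GRing.Theory Num.Theory.
Local Open Scope ring_scope.

(* The elements of P_tau other than b are those of P_(tilde tau), through the
   rank-preserving embedding [embed] (ranks above that of b move down by one
   when its level disappears), and restriction to them, with extension by zero
   as inverse, identifies the face x_b = 0 with a polytope on P_(tilde tau).
   Only the chain inequalities need thought.  If b is alone in its rank, every
   chain passes through b, where it contributes x_b = 0, so chains of P_tau are
   chains of P_(tilde tau) with b inserted.  Otherwise a chain through b is
   dominated by the same chain through another element b' of that rank, as
   x_b = 0 <= x_b'. *)

Section ExtendZero.
Variables (R : pzRingType) (T1 T2 : finType) (f : T2 -> T1).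

Definition extend_zero (y : T2 -> R) (s : T1) : R := \sum_t (f t == s)%:R * y t.

Lemma affine_map_extend_zero : affine_map extend_zero.
Proof. by exists (fun s t => (f t == s)%:R), (fun=> 0) => y s; rewrite add0r. Qed.

Lemma affine_map_comp : affine_map (fun (x : T1 -> R) t => x (f t)).
Proof.
exists (fun t s => (s == f t)%:R), (fun=> 0) => x t.
rewrite add0r (bigD1 (f t)) //= eqxx mul1r big1 ?addr0 // => s /negbTE->.
by rewrite mul0r.
Qed.

Hypothesis f_inj : injective f.

Lemma extend_zeroE y t : extend_zero y (f t) = y t.
Proof.
rewrite /extend_zero (bigD1 t) //= eqxx mul1r big1 ?addr0 // => t' /negbTE ne_t't.
by rewrite (inj_eq f_inj) ne_t't mul0r.
Qed.

Lemma extend_zero_out y s : s \notin codom f -> extend_zero y s = 0.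
Proof.
move=> s_out; rewrite /extend_zero big1 // => t _.
by case: eqP s_out => [<-|_ _]; rewrite ?codom_f ?mul0r.
Qed.

Lemma affinely_isomorphic_restrict (A : (T1 -> R) -> Prop) (B : (T2 -> R) -> Prop) :
  (forall x s, A x -> s \notin codom f -> x s = 0) ->
  (forall x, A x -> B (fun t => x (f t))) ->
  (forall y, B y -> A (extend_zero y)) ->
  affinely_isomorphic A B.
Proof.
move=> A_out AB BA; exists (fun x t => x (f t)), extend_zero.
split; [exact: affine_map_comp | exact: affine_map_extend_zero | by [] | by [] | split].
- move=> x Ax; apply: functional_extensionality => s.
  have [/codomP [t ->]|s_out] := boolP (s \in codom f); first exact: extend_zeroE.
  by rewrite extend_zero_out // A_out.
- by move=> y _; apply: functional_extensionality => t; exact: extend_zeroE.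
Qed.

End ExtendZero.

Definition pos (tau : seq nat) (p : elt tau) : nat := val (tagged p).

Definition mk_elt tau r j (lt_r : (r < size tau)%N) (lt_j : (j < nth 0%N tau r)%N) :
  elt tau := existT _ (Ordinal lt_r) (Ordinal lt_j).

Lemma rk_mk_elt tau r j lt_r lt_j : rk (@mk_elt tau r j lt_r lt_j) = r. Proof. by []. Qed.

Lemma pos_mk_elt tau r j lt_r lt_j : pos (@mk_elt tau r j lt_r lt_j) = j. Proof. by []. Qed.

Lemma elt_ext tau (p q : elt tau) : rk p = rk q -> pos p = pos q -> p = q.
Proof.
case: p q => [[r lt_r] [j lt_j]] [[r' lt_r'] [j' lt_j']]; rewrite /rk /pos /=.
move=> er ej; subst r' j'.
by rewrite (bool_irrelevance lt_r' lt_r) (bool_irrelevance lt_j' lt_j).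
Qed.

Lemma rk_lt tau (p : elt tau) : (rk p < size tau)%N. Proof. exact: ltn_ord. Qed.

Lemma pos_lt tau (p : elt tau) : (pos p < nth 0%N tau (rk p))%N.
Proof. exact: ltn_ord. Qed.

Definition is_chain tau m (c : 'I_m -> elt tau) : Prop := forall j : 'I_m, rk (c j) = j.

Lemma bumpE h r : bump h r = if (h <= r)%N then r.+1 else r.
Proof. by rewrite /bump; case: leqP; rewrite ?add1n ?add0n. Qed.

Lemma unbumpE h r : unbump h r = if (h < r)%N then r.-1 else r.
Proof. by rewrite /unbump; case: ltnP; rewrite ?subn1 ?subn0. Qed.

Section TauTilde.
Variables (tau : seq nat) (i : nat).
Hypothesis lt_i : (i < size tau)%N.

Lemma size_tau_tilde :
  size (tau_tilde tau i) = if nth 0%N tau i == 1%N then (size tau).-1 else size tau.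
Proof.
rewrite /tau_tilde; case: ifP => _; last by rewrite size_set_nth; lia.
by rewrite size_cat size_take lt_i size_drop; lia.
Qed.

Lemma nth_tau_tilde r : nth 0%N (tau_tilde tau i) r =
  if nth 0%N tau i == 1%N then nth 0%N tau (bump i r)
  else if r == i then (nth 0%N tau i).-1 else nth 0%N tau r.
Proof.
rewrite /tau_tilde; case: ifP => _; last by rewrite nth_set_nth.
rewrite nth_cat size_take lt_i bumpE nth_drop; case: (ltnP r i) => lt_ri.
  by rewrite nth_take // leqNgt lt_ri.
by congr nth; lia.
Qed.

End TauTilde.

Section Deletion.
Variables (tau : seq nat) (b : elt tau).

Local Notation ttau := (tau_tilde tau (rk b)).

Definition level_vanishes : bool := nth 0%N tau (rk b) == 1%N.

Definition lift_rank r := if level_vanishes then bump (rk b) r else r.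

Definition lift_pos r j :=
  if level_vanishes then j else if r == rk b then bump (pos b) j else j.

Lemma size_ttau : size ttau = if level_vanishes then (size tau).-1 else size tau.
Proof. by rewrite size_tau_tilde ?rk_lt. Qed.

Lemma nth_ttau r : nth 0%N ttau r = if level_vanishes then nth 0%N tau (bump (rk b) r)
  else if r == rk b then (nth 0%N tau (rk b)).-1 else nth 0%N tau r.
Proof. by rewrite nth_tau_tilde ?rk_lt. Qed.

Lemma lift_rank_lt r : (r < size ttau)%N -> (lift_rank r < size tau)%N.
Proof.
rewrite size_ttau /lift_rank; have := rk_lt b.
by case: level_vanishes => // ?; rewrite bumpE; case: (leqP (rk b) r); lia.
Qed.

Lemma lift_pos_lt r j :
  (j < nth 0%N ttau r)%N -> (lift_pos r j < nth 0%N tau (lift_rank r))%N.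
Proof.
rewrite nth_ttau /lift_pos /lift_rank; case: level_vanishes => //.
by case: eqP => // -> ?; rewrite bumpE; case: (leqP (pos b) j); lia.
Qed.

Definition embed (t : elt ttau) : elt tau :=
  let: existT r j := t in mk_elt (lift_rank_lt (ltn_ord r)) (lift_pos_lt (ltn_ord j)).

Lemma rk_embed t : rk (embed t) = lift_rank (rk t). Proof. by case: t. Qed.

Lemma pos_embed t : pos (embed t) = lift_pos (rk t) (pos t). Proof. by case: t. Qed.

Lemma embed_inj : injective embed.
Proof.
move=> t1 t2 eq_t12.
have eq_rk : rk t1 = rk t2.
  have := congr1 (@rk _) eq_t12; rewrite !rk_embed /lift_rank.
  by case: level_vanishes => // /(can_inj (bumpK _)).
apply: elt_ext => //; have := congr1 (@pos _) eq_t12.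
rewrite !pos_embed eq_rk /lift_pos; case: level_vanishes => //.
by case: eqP => // _ /(can_inj (bumpK _)).
Qed.

Lemma b_notin_codom_embed : b \notin codom embed.
Proof.
apply/codomP => -[t /esym eq_tb].
have := congr1 (@rk _) eq_tb; have := congr1 (@pos _) eq_tb.
rewrite rk_embed pos_embed /lift_rank /lift_pos; case: level_vanishes => [_|].
  by move/eqP; rewrite eq_sym (negbTE (neq_bump _ _)).
case: eqP => // _ /eqP; by rewrite eq_sym (negbTE (neq_bump _ _)).
Qed.

Lemma vanishing_level_b s : level_vanishes -> rk s = rk b -> s = b.
Proof.
move=> /eqP lv eq_rk; apply: elt_ext => //.
by have := pos_lt s; have := pos_lt b; rewrite eq_rk lv; lia.
Qed.

Lemma level_other_elt : ~~ level_vanishes -> exists2 b', b' != b & rk b' = rk b.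
Proof.
move=> /eqP lv; have lt_b' : ((pos b == 0%N) < nth 0%N tau (rk b))%N.
  by have := pos_lt b; case: eqP => _ /=; lia.
exists (mk_elt (rk_lt b) lt_b') => //.
by apply/eqP => /(congr1 (@pos _)); rewrite pos_mk_elt; case: eqP; lia.
Qed.

Lemma embed_onto s : s != b -> exists t, s = embed t.
Proof.
move=> ne_sb; case lv: level_vanishes.
  have ne_rk : rk s != rk b by apply: contra_neq ne_sb; exact: vanishing_level_b.
  have lt_r : (unbump (rk b) (rk s) < size ttau)%N.
    rewrite size_ttau lv unbumpE; have := rk_lt s; have := rk_lt b.
    by move: ne_rk; case: (ltnP (rk b) (rk s)) => ? /eqP; lia.
  have lt_j : (pos s < nth 0%N ttau (unbump (rk b) (rk s)))%N.
    by rewrite nth_ttau lv unbumpK //; exact: pos_lt.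
  exists (mk_elt lt_r lt_j); apply: elt_ext.
    by rewrite rk_embed /lift_rank lv rk_mk_elt unbumpK.
  by rewrite pos_embed /lift_pos lv.
have lt_r : (rk s < size ttau)%N by rewrite size_ttau lv; exact: rk_lt.
have [eq_rk|ne_rk] := eqVneq (rk s) (rk b).
  have ne_pos : pos s != pos b by apply: contra_neq ne_sb; exact: elt_ext.
  have lt_j : (unbump (pos b) (pos s) < nth 0%N ttau (rk s))%N.
    rewrite nth_ttau lv eq_rk eqxx unbumpE; have := pos_lt s; have := pos_lt b.
    by rewrite eq_rk; move: ne_pos; case: (ltnP (pos b) (pos s)) => ? /eqP; lia.
  exists (mk_elt lt_r lt_j); apply: elt_ext; first by rewrite rk_embed /lift_rank lv.
  by rewrite pos_embed /lift_pos lv rk_mk_elt pos_mk_elt eq_rk eqxx unbumpK // eq_sym.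
have lt_j : (pos s < nth 0%N ttau (rk s))%N.
  by rewrite nth_ttau lv (negbTE ne_rk); exact: pos_lt.
exists (mk_elt lt_r lt_j); apply: elt_ext; first by rewrite rk_embed /lift_rank lv.
by rewrite pos_embed /lift_pos lv rk_mk_elt (negbTE ne_rk).
Qed.

Section Ranks.
Variable k : nat.
Hypothesis lt_b_k : (rk b < k)%N.

Local Notation kt := (k_tilde tau k (rk b)).

Lemma k_tildeE : kt = if level_vanishes then k.-1 else k. Proof. by []. Qed.

Lemma lift_rank_ltk r : (lift_rank r < k)%N = (r < kt)%N.
Proof.
rewrite k_tildeE /lift_rank; case: level_vanishes => //.
by rewrite bumpE; case: (leqP (rk b) r) => ?; apply/idP/idP; lia.
Qed.

Lemma k_le_lift_rank r : (k <= lift_rank r)%N = (kt <= r)%N.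
Proof. by rewrite leqNgt lift_rank_ltk -leqNgt. Qed.

Lemma lift_rank_eqk r : (lift_rank r == k) = (r == kt).
Proof.
rewrite k_tildeE /lift_rank; case: level_vanishes => //.
by rewrite bumpE; case: (leqP (rk b) r) => ?; apply/eqP/eqP; lia.
Qed.

Lemma lift_rank_succ r1 r2 :
  (kt <= r1)%N -> (lift_rank r2 == (lift_rank r1).+1) = (r2 == r1.+1).
Proof.
rewrite k_tildeE /lift_rank; case: level_vanishes => // ?; rewrite !bumpE.
by case: (leqP (rk b) r1) => ?; case: (leqP (rk b) r2) => ?; apply/eqP/eqP; lia.
Qed.

Lemma lift_rank_last r :
  (kt <= r)%N -> ((lift_rank r).+1 == size tau) = (r.+1 == size ttau).
Proof.
rewrite k_tildeE size_ttau /lift_rank; have := rk_lt b.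
case: level_vanishes => // ? ?; rewrite bumpE.
by case: (leqP (rk b) r) => ?; apply/eqP/eqP; lia.
Qed.

Lemma k_tilde_eq_size : (k == size tau) = (kt == size ttau).
Proof.
rewrite k_tildeE size_ttau; have := rk_lt b.
by case: level_vanishes => // ?; apply/eqP/eqP; lia.
Qed.

Lemma ge_k_embed s : (k <= rk s)%N -> exists2 t, s = embed t & (kt <= rk t)%N.
Proof.
move=> le_k_s; have /embed_onto [t eq_st] : s != b.
  by apply: contraTneq le_k_s => ->; rewrite -ltnNge.
by exists t; rewrite // -k_le_lift_rank -rk_embed -eq_st.
Qed.

Section Chains.
Variables (R : numDomainType) (x : elt tau -> R).
Hypothesis xb0 : x b = 0.

Lemma chain_from_tilde (ct : 'I_kt -> elt ttau) : is_chain ct ->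
  exists2 c : 'I_k -> elt tau, is_chain c &
    \sum_(j < k) x (c j) = \sum_(j < kt) x (embed (ct j)).
Proof.
move: ct; rewrite k_tildeE; case lv: level_vanishes => ct ct_chain.
- pose jb : 'I_k := Ordinal lt_b_k.
  exists (fun j => if unlift jb j is Some j' then embed (ct j') else b).
    move=> j; case: unliftP => [j' ->|->] //=.
    by rewrite rk_embed ct_chain /lift_rank lv.
  rewrite (bigD1_ord jb) //= unlift_none xb0 add0r.
  by apply: eq_bigr => j _; rewrite liftK.
- by exists (fun j => embed (ct j)) => // j; rewrite rk_embed ct_chain /lift_rank lv.
Qed.

Hypothesis x_ge0 : forall p, (rk p < k)%N -> 0 <= x p.

Lemma chain_to_tilde (c : 'I_k -> elt tau) : is_chain c ->
  exists2 ct : 'I_kt -> elt ttau, is_chain ct &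
    \sum_(j < k) x (c j) <= \sum_(j < kt) x (embed (ct j)).
Proof.
move=> c_chain; rewrite k_tildeE; case lv: level_vanishes.
- pose jb : 'I_k := Ordinal lt_b_k.
  have c_jb : c jb = b by apply: vanishing_level_b; rewrite ?c_chain.
  have c_lift_neq j : c (lift jb j) != b.
    by apply: contra_neq (neq_bump (rk b) j) => eq_cb; rewrite -[in LHS]eq_cb c_chain.
  have [ct ct_embed] := fin_all_exists (fun j => embed_onto (c_lift_neq j)).
  exists ct.
    move=> j; have := congr1 (@rk _) (ct_embed j).
    by rewrite rk_embed c_chain /lift_rank lv => /(can_inj (bumpK _)).
  rewrite (bigD1_ord jb) //= c_jb xb0 add0r.
  by under eq_bigr => j _ do rewrite ct_embed.
- have [b' ne_b'b rk_b'] := level_other_elt (negbT lv).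
  pose c' j := if c j == b then b' else c j.
  have c'_neq j : c' j != b by rewrite /c'; case: (c j =P b) => // /eqP.
  have [ct ct_embed] := fin_all_exists (fun j => embed_onto (c'_neq j)).
  exists ct.
    move=> j; have := congr1 (@rk _) (ct_embed j).
    rewrite rk_embed /lift_rank lv => <-; rewrite /c'.
    by case: (c j =P b) => [eq_cb|_]; rewrite ?rk_b' -?eq_cb c_chain.
  apply: ler_sum => j _; rewrite -ct_embed /c'; case: eqP => [->|//].
  by rewrite xb0 x_ge0 // rk_b'.
Qed.

End Chains.

Lemma face_restrict_mem (R : realFieldType) (x : elt tau -> R) :
  chain_order_polytope k x -> x b = 0 -> chain_order_polytope kt (fun t => x (embed t)).
Proof.
move=> [x_ge0 [x_cover [x_top x_chain]]] xb0.
split; [|split; [|split]].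
- by move=> t; rewrite -lift_rank_ltk -rk_embed; exact: x_ge0.
- move=> t t' le_kt succ; apply: x_cover; first by rewrite rk_embed k_le_lift_rank.
  by apply/eqP; rewrite !rk_embed lift_rank_succ // succ.
- move=> t le_kt last; apply: x_top; first by rewrite rk_embed k_le_lift_rank.
  by apply/eqP; rewrite rk_embed lift_rank_last // last.
- move=> ct ct_chain; have [c c_chain <-] := chain_from_tilde xb0 ct_chain.
  have [x_q x_one] := x_chain c c_chain; split.
    by move=> q q_kt; apply: x_q; apply/eqP; rewrite rk_embed lift_rank_eqk q_kt.
  by move=> kt_size; apply: x_one; apply/eqP; rewrite k_tilde_eq_size kt_size.
Qed.

Lemma extend_zero_mem (R : realFieldType) (y : elt ttau -> R) :
  chain_order_polytope kt y -> chain_order_polytope k (extend_zero embed y).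
Proof.
move=> [y_ge0 [y_cover [y_top y_chain]]].
have embedE := extend_zeroE embed_inj y.
have yb0 : extend_zero embed y b = 0 := extend_zero_out y b_notin_codom_embed.
have x_ge0 p : (rk p < k)%N -> 0 <= extend_zero embed y p.
  case: (eqVneq p b) => [-> _|/embed_onto [t ->]]; first by rewrite yb0.
  by rewrite rk_embed lift_rank_ltk embedE; exact: y_ge0.
split; [exact: x_ge0 | split; [|split]].
- move=> _ a' /ge_k_embed [t -> le_kt] succ.
  have [t' eq_a' _] : exists2 t', a' = embed t' & (kt <= rk t')%N.
    by apply: ge_k_embed; rewrite succ leqW // rk_embed k_le_lift_rank.
  subst a'; rewrite !embedE; apply: y_cover => //.
  by apply/eqP; rewrite -(lift_rank_succ _ le_kt) -!rk_embed succ.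
- move=> _ /ge_k_embed [t -> le_kt] last; rewrite embedE; apply: y_top => //.
  by apply/eqP; rewrite -(lift_rank_last le_kt) -rk_embed last.
- move=> c c_chain; have [ct ct_chain le_sum] := chain_to_tilde yb0 x_ge0 c_chain.
  have sumE : \sum_(j < kt) extend_zero embed y (embed (ct j)) = \sum_(j < kt) y (ct j).
    by apply: eq_bigr => j _; exact: embedE.
  rewrite sumE in le_sum; have [y_q y_one] := y_chain ct ct_chain; split.
    move=> q rk_q; have [t eq_q _] := ge_k_embed (eq_leq (esym rk_q)); subst q.
    apply: (le_trans le_sum); rewrite embedE; apply: y_q; apply/eqP.
    by rewrite -lift_rank_eqk -rk_embed rk_q.
  move=> k_size; apply: (le_trans le_sum); apply: y_one.
  by apply/eqP; rewrite -k_tilde_eq_size k_size.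
Qed.

End Ranks.

End Deletion.

Theorem proposition3p6 (R : realFieldType) (tau : seq nat) (k : nat)
    (b : elt tau) :
  all (fun t => 0 < t)%N tau ->
  (k <= size tau)%N ->
  (rk b < k)%N ->
  affinely_isomorphic
    (fun x : elt tau -> R => chain_order_polytope k x /\ x b = 0)
    (fun y : elt (tau_tilde tau (rk b)) -> R =>
       chain_order_polytope (k_tilde tau k (rk b)) y).
Proof.
move=> _ _ lt_b_k; apply: (affinely_isomorphic_restrict (@embed_inj tau b)).
- move=> x s [_ xb0]; case: (eqVneq s b) => [-> //|/embed_onto [t ->]].
  by rewrite codom_f.
- by move=> x [Px xb0]; exact: face_restrict_mem.
- move=> y Py; split; first exact: extend_zero_mem.
  by rewrite extend_zero_out ?b_notin_codom_embed.
Qed.
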